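(* In the setting below, there exist an affine function $c:\mathbb R^{n\times n}\to\mathbb R$ and an affine matrix-valued function $\mathbf Z:\mathbb R^{n\times n}\to\mathbb R^{n\times n}$, determined by $\mathrm{metric}^{(0)}$, and for each $l\in[1,t]$ a constant $\mu_l\in\mathbb R$ and a matrix $\mathbf B^{(l)}\in\mathbb R^{n\times n}$, determined by $\mathrm{metric}^{(l)}$ and the label vector $\mathbf y$, such that for every $\theta\in\mathbb R^m$, $$\min_{\mathbf Q\in\Delta}\max_{\mathbf P\in\Delta\cap\Gamma}\Big[O^{(0)}(\mathbf Q,\mathbf P)-\langle\mathbf Q^\top\mathbf 1,\Psi^\top\theta\rangle\Big]$$ equals the optimal value of the linear program $$\min_{\mathbf Q\in\Delta,\ \boldsymbol\alpha\in\mathbb R^{n\times n}_{\ge0},\ \boldsymbol\beta\in\mathbb R^t_{\ge0},\ v\ge0}\ v+c(\mathbf Q)-\langle\mathbf Q,\Psi^\top\theta\mathbf 1^\top\rangle+\sum_{l=1}^t\beta_l(\mu_l-\tau_l)$$ $$\text{s.t.}\quad v\ge\mathbf Z(\mathbf Q)_{(i,k)}-\alpha_{i,k}+\tfrac1k\textstyle\sum_j\alpha_{j,k}+\sum_{l=1}^t\beta_l\,(\mathbf B^{(l)})_{(i,k)}\quad\forall i,k\in[1,n].$$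
   Context: $n,m,t\ge1$, $\mathbf y\in\{0,1\}^n$, $l^\star=\sum_iy_i$, $\Psi\in\mathbb R^{m\times n}$, $\tau_1,\dots,\tau_t\in\mathbb R$. Metrics $\mathrm{metric}^{(i)}(\hat{\mathbf y},\check{\mathbf y})=\sum_j\frac{a_j^{(i)}\mathrm{TP}+b_j^{(i)}\mathrm{TN}+f_j^{(i)}(\mathrm{PP},\mathrm{AP})}{g_j^{(i)}(\mathrm{PP},\mathrm{AP})}$, $i=0,\dots,t$, with $\mathrm{TP}=\sum\hat y_i\check y_i$, $\mathrm{TN}=\sum(1-\hat y_i)(1-\check y_i)$, $\mathrm{PP}=\sum\hat y_i$, $\mathrm{AP}=\sum\check y_i$, constants $a_j^{(i)},b_j^{(i)}$, functions $f_j^{(i)},g_j^{(i)}:\{0,\dots,n\}^2\to\mathbb R$ with $g_j^{(i)}$ never zero. $\Delta=\{\mathbf P\in\mathbb R^{n\times n}: p_{i,k}\ge0;\ p_{i,k}\le\frac1k\sum_jp_{j,k}\ \forall i,k;\ \sum_k\frac1k\sum_ip_{i,k}\le1\}$. From $\mathbf P$: $\mathbf p_k^1=\mathbf P_{(:,k)}$ ($k\ge1$), $\mathbf p_0^1=\mathbf 0$; $r_k=\frac1k\mathbf 1^\top\mathbf p_k^1$ ($k\ge1$), $r_0=1-\sum_{k\ge1}r_k$; $\mathbf p_k^0=r_k\mathbf 1-\mathbf p_k^1$; likewise $\mathbf q_l^1,\mathbf q_l^0,s_l$ from $\mathbf Q$. $O^{(0)}(\mathbf Q,\mathbf P)=\sum_{k,l=0}^n\sum_j\frac{1}{g^{(0)}_j(k,l)}\{a^{(0)}_j[\mathbf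 p_k^1\cdot\mathbf q_l^1]+b^{(0)}_j[\mathbf p_k^0\cdot\mathbf q_l^0]+f^{(0)}_j(k,l)r_ks_l\}$. $\Gamma=\{\mathbf P:\sum_{k=0}^n\sum_j\frac{1}{g^{(i)}_j(k,l^\star)}\{a^{(i)}_j[\mathbf p_k^1\cdot\mathbf y]+b^{(i)}_j[\mathbf p_k^0\cdot(\mathbf 1-\mathbf y)]+f^{(i)}_j(k,l^\star)r_k\}\ge\tau_i\ \forall i\in[1,t]\}$. *)

From Stdlib Require List.
From HB Require Import structures.
From mathcomp Require Import all_boot all_order all_algebra.
From mathcomp Require Import all_classical all_reals ereal.
Set Implicit Arguments. Unset Strict Implicit. Unset Printing Implicit Defensive.
Import Order.TTheory GRing.Theory Num.Theory.
Local Open Scope ring_scope.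
Local Open Scope classical_set_scope.

(* One summand  (a*TP + b*TN + f(PP,AP)) / g(PP,AP)  of a performance metric. *)
Record mterm (R : Type) := MTerm {
  ma : R; mb : R; mf : nat -> nat -> R; mg : nat -> nat -> R }.

(* A metric is the finite sum (over j) of its terms. *)
Definition metric (R : Type) := seq (mterm R).

Section Defs.
Variable R : realType.

Definition g_nonzero (n : nat) (met : metric R) : Prop :=
  forall tm, List.In tm met -> forall k l : nat, (k <= n)%N -> (l <= n)%N -> mg tm k l != 0.

Definition affine_mx (n : nat) (Z : 'M[R]_n -> 'M[R]_n) : Prop :=
  forall (x y : 'M[R]_n) (a : R), Z (a *: x + (1 - a) *: y) = a *: Z x + (1 - a) *: Z y.
Definition affine_fun (n : nat) (c : 'M[R]_n -> R) : Prop :=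
  forall (x y : 'M[R]_n) (a : R), c (a *: x + (1 - a) *: y) = a * c x + (1 - a) * c y.

Variable n : nat.
Implicit Types P Q : 'M[R]_n.

Definition dotv (u v : 'I_n -> R) : R := \sum_(i < n) u i * v i.

(* column k of P is p_{k+1}^1 ; p_k^1 for k in 0..n, p_0^1 = 0 *)
Definition p1 P (k : nat) : 'I_n -> R := fun i => \sum_(j < n | j.+1 == k) P i j.
Definition rk P (k : nat) : R :=
  if k is 0 then 1 - \sum_(j < n) (j.+1%:R)^-1 * \sum_(i < n) P i j
  else (k%:R)^-1 * \sum_(i < n) p1 P k i.
Definition p0 P (k : nat) : 'I_n -> R := fun i => rk P k - p1 P k i.

(* Delta (column index k : 'I_n stands for k+1) *)
Definition inDelta P : Prop :=
  (forall i k : 'I_n, 0 <= P i k) /\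
  (forall i k : 'I_n, P i k <= (k.+1%:R)^-1 * \sum_(j < n) P j k) /\
  \sum_(k < n) (k.+1%:R)^-1 * \sum_(i < n) P i k <= 1.

Definition O0 (met : metric R) Q P : R :=
  \sum_(k < n.+1) \sum_(l < n.+1) \sum_(tm <- met)
    (mg tm k l)^-1 * (ma tm * dotv (p1 P k) (p1 Q l) + mb tm * dotv (p0 P k) (p0 Q l)
                       + mf tm k l * rk P k * rk Q l).

Definition yvec (y : 'I_n -> bool) : 'I_n -> R := fun i => (y i)%:R.
Definition lstar (y : 'I_n -> bool) : nat := \sum_(i < n) (y i : nat).

(* Gamma, with metrics^{(l+1)} = metrics l for l : 'I_t *)
Definition inGamma (t : nat) (metrics : 'I_t -> metric R) (y : 'I_n -> bool)
  (tau : 'I_t -> R) P : Prop :=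
  forall l : 'I_t,
    tau l <= \sum_(k < n.+1) \sum_(tm <- metrics l)
      (mg tm k (lstar y))^-1 *
        (ma tm * dotv (p1 P k) (yvec y)
         + mb tm * dotv (p0 P k) (fun i => 1 - yvec y i)
         + mf tm k (lstar y) * rk P k).

Definition PsiT_theta (m : nat) (Psi : 'M[R]_(m, n)) (theta : 'cV[R]_m) : 'I_n -> R :=
  fun i => (Psi^T *m theta) i ord0.

Definition Q1 Q : 'I_n -> R := fun i => \sum_(k < n) Q i k.

Definition minmax_value (met0 : metric R) (t : nat) (metrics : 'I_t -> metric R)
  (y : 'I_n -> bool) (tau : 'I_t -> R) (m : nat) (Psi : 'M[R]_(m, n))
  (theta : 'cV[R]_m) : \bar R :=
  ereal_inf [set ereal_sup
      [set ((O0 met0 Q P - dotv (Q1 Q) (PsiT_theta Psi theta))%:E)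
         | P in [set P | inDelta P /\ inGamma metrics y tau P]]
    | Q in [set Q | inDelta Q]].

Definition lp_value (c : 'M[R]_n -> R) (Z : 'M[R]_n -> 'M[R]_n) (t : nat)
  (mu : 'I_t -> R) (B : 'I_t -> 'M[R]_n) (tau : 'I_t -> R) (m : nat)
  (Psi : 'M[R]_(m, n)) (theta : 'cV[R]_m) : \bar R :=
  ereal_inf [set z : \bar R | exists (Q alpha : 'M[R]_n) (beta : 'I_t -> R) (v : R),
     [/\ inDelta Q, (forall i k, 0 <= alpha i k), (forall l, 0 <= beta l) /\ 0 <= v,
      (forall i k : 'I_n,
         Z Q i k - alpha i k + (k.+1%:R)^-1 * \sum_(j < n) alpha j k
           + \sum_(l < t) beta l * B l i k <= v) &
      z = (v + c Q - \sum_(i < n) \sum_(k < n) Q i k * PsiT_theta Psi theta i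
             + \sum_(l < t) beta l * (mu l - tau l))%:E]].

End Defs.

From HB Require Import structures.
From mathcomp Require Import all_boot all_order all_algebra.
From mathcomp Require Import all_classical all_reals ereal.
From mathcomp Require Import ring lra.
Import Order.TTheory GRing.Theory Num.Theory.
Set Implicit Arguments. Unset Strict Implicit. Unset Printing Implicit Defensive.
Local Open Scope ring_scope.
Local Open Scope classical_set_scope.

(* For a fixed [Q], the objective [P |-> O0(Q,P) - <Q 1, Psi^T theta>] and all the
   constraints defining [Delta] and [Gamma] are affine in [P], so the inner maximum is
   the value of a linear program.  Its dual value, the least [K] for which the
   objective plus a nonnegative combination of the constraints is identically [K], is
   obtained from Farkas' lemma, proved by Fourier-Motzkin elimination.  Writing the
   affine maps through their coefficients ([c], [Z], [mu], [B]) and calling [alpha],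
   [beta], [v] the multipliers of the column constraints, of [Gamma] and of the budget
   constraint, this dual is the stated linear program for that [Q]; the outer minimum
   over [Q] then merges with the dual minimum. *)


Section FourierMotzkin.
Variable R : realFieldType.

Lemma sum_delta (J : finType) (j0 : J) (F : J -> R) :
  \sum_j (j == j0)%:R * F j = F j0.
Proof.
by rewrite (bigD1 j0) //= eqxx mul1r big1 ?addr0 // => j /negbTE ->; rewrite mul0r.
Qed.

Lemma exists_affine1_nonneg (J : finType) (r a : J -> R) :
  (forall j, a j = 0 -> 0 <= r j) ->
  (forall p q, 0 < a p -> a q < 0 -> 0 <= - a q * r p + a p * r q) ->
  exists t, forall j, 0 <= r j + a j * t.
Proof.
move=> r_ge0 r_pair.
have [p ap | no_pos] := pickP (fun p => 0 < a p).
  have [ps /= aps ps_max] :=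
    @arg_maxP _ _ _ p (fun p => 0 < a p) (fun p => - r p / a p) ap.
  exists (- r ps / a ps) => j.
  case: (ltgtP (a j) 0) => [aj|aj|aj0]; last by rewrite aj0 mul0r addr0 r_ge0.
  - have -> : r j + a j * (- r ps / a ps) = (- a j * r ps + a ps * r j) / a ps.
      by field; rewrite gt_eqF.
    by rewrite divr_ge0 ?r_pair ?ltW.
  - by rewrite -lerBlDl sub0r mulrC -ler_pdivrMr // ps_max.
have [q aq | no_neg] := pickP (fun q => a q < 0).
  have [qs /= aqs qs_min] :=
    @arg_minP _ _ _ q (fun q => a q < 0) (fun q => r q / - a q) aq.
  exists (r qs / - a qs) => j.
  case: (ltgtP (a j) 0) => [aj|aj|aj0]; last by rewrite aj0 mul0r addr0 r_ge0.
  - rewrite -lerBlDl sub0r -[a j * _]opprK lerN2 -mulNr mulrC.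
    by rewrite -ler_pdivlMr ?oppr_gt0 // qs_min.
  - by move: (no_pos j); rewrite /= aj.
exists 0 => j; rewrite mulr0 addr0 r_ge0 //.
by case: (ltgtP (a j) 0) => // [aj|aj]; [move: (no_neg j) | move: (no_pos j)]; rewrite /= aj.
Qed.

Variable I : eqType.

Definition form_eval (s : seq I) (a : I -> R) (b : R) (x : I -> R) : R :=
  \sum_(i <- s) a i * x i + b.

Lemma form_eval_cons i0 s a b x :
  form_eval (i0 :: s) a b x = a i0 * x i0 + form_eval s a b x.
Proof. by rewrite /form_eval big_cons addrA. Qed.

Lemma form_eval_comb (J : finType) s (w : J -> R) (a : J -> I -> R) (b : J -> R) x :
  form_eval s (fun i => \sum_j w j * a j i) (\sum_j w j * b j) x =
  \sum_j w j * form_eval s (a j) (b j) x.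
Proof.
rewrite /form_eval; under eq_bigr do rewrite mulr_suml.
rewrite exchange_big -big_split /=; apply: eq_bigr => j _.
by rewrite mulrDr mulr_sumr; congr (_ + _); apply: eq_bigr => i _; rewrite mulrA.
Qed.

Lemma form_eval_set s a b x i0 t : i0 \notin s ->
  form_eval s a b (fun i => if i == i0 then t else x i) = form_eval s a b x.
Proof.
move=> i0s; congr (_ + _); apply: eq_big_seq => i i_s.
by case: eqP i_s => // ->; rewrite (negbTE i0s).
Qed.

(* One Fourier-Motzkin step on a coordinate with coefficients [c]: keep the forms with
   [c p = 0] and add [- c q * form p + c p * form q] whenever [c p > 0 > c q]. *)
Definition fm_weight (J : finType) (c : J -> R) (j' : J + J * J) (j : J) : R :=
  match j' with
  | inl p => ((j == p) && (c p == 0))%:R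
  | inr (p, q) =>
      if (0 < c p) && (c q < 0) then - c q * (j == p)%:R + c p * (j == q)%:R else 0
  end.

Lemma fm_weight_ge0 (J : finType) (c : J -> R) j' j : 0 <= fm_weight c j' j.
Proof.
case: j' => [p|[p q]] /=; first exact: ler0n.
case: ifP => [/andP[cp cq]|_] //.
by rewrite addr_ge0 // mulr_ge0 ?ler0n ?oppr_ge0 ?ltW.
Qed.

Lemma sum_fm_weight_inl (J : finType) (c : J -> R) p (F : J -> R) :
  \sum_j fm_weight c (inl p) j * F j = (c p == 0)%:R * F p.
Proof.
by rewrite (bigD1 p) //= eqxx big1 ?addr0 // => j /negbTE ->; rewrite mul0r.
Qed.

Lemma sum_fm_weight_inr (J : finType) (c : J -> R) p q (F : J -> R) :
  0 < c p -> c q < 0 ->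
  \sum_j fm_weight c (inr (p, q)) j * F j = - c q * F p + c p * F q.
Proof.
move=> cp cq; rewrite /= cp cq.
under eq_bigr do rewrite mulrDl -!mulrA.
by rewrite big_split -!mulr_sumr !sum_delta.
Qed.

Lemma fm_weight_elim (J : finType) (c : J -> R) j' :
  \sum_j fm_weight c j' j * c j = 0.
Proof.
case: j' => [p|[p q]].
  by rewrite sum_fm_weight_inl; case: eqP => [->|]; rewrite ?mulr0 ?mul0r.
have [/andP[cp cq]|cpq] := boolP ((0 < c p) && (c q < 0)).
  by rewrite sum_fm_weight_inr //; ring.
by rewrite big1 // => j _; rewrite /= (negbTE cpq) mul0r.
Qed.

Theorem farkas_seq s : uniq s ->
  forall (J : finType) (a : J -> I -> R) (b : J -> R),
  (exists x, forall j, 0 <= form_eval s (a j) (b j) x) \/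
  (exists w : J -> R, (forall j, 0 <= w j) /\
     forall x, \sum_j w j * form_eval s (a j) (b j) x = -1).
Proof.
elim: s => [_|i0 s IH /= /andP[i0s s_uniq]] J a b.
  have eval_nil j x : form_eval [::] (a j) (b j) x = b j.
    by rewrite /form_eval big_nil add0r.
  have [j0 bj0 | b_ge0] := pickP (fun j => b j < 0).
    right; exists (fun j => (j == j0)%:R / - b j0); split.
      by move=> j; rewrite divr_ge0 ?ler0n // oppr_ge0 ltW.
    move=> x; under eq_bigr do rewrite eval_nil mulrAC.
    by rewrite -mulr_suml sum_delta invrN mulrN mulfV ?lt_eqF.
  left; exists (fun _ => 0) => j; rewrite eval_nil.
  by move: (b_ge0 j) => /negbT; rewrite -leNgt.
pose c j := a j i0.
have [[x x_feas]|[w [w_ge0 w_sum]]] :=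
  IH s_uniq _ (fun j' i => \sum_j fm_weight c j' j * a j i)
              (fun j' => \sum_j fm_weight c j' j * b j).
  left.
  have [t t_ok] : exists t, forall j, 0 <= form_eval s (a j) (b j) x + c j * t.
    apply: exists_affine1_nonneg => [j cj0|p q cp cq].
      by have := x_feas (inl j); rewrite form_eval_comb sum_fm_weight_inl cj0 eqxx mul1r.
    by have := x_feas (inr (p, q)); rewrite form_eval_comb sum_fm_weight_inr.
  exists (fun i => if i == i0 then t else x i) => j.
  by rewrite form_eval_cons eqxx form_eval_set // addrC.
right; exists (fun j => \sum_j' w j' * fm_weight c j' j); split.
  by move=> j; apply: sumr_ge0 => j' _; rewrite mulr_ge0 ?fm_weight_ge0.
move=> x; rewrite -(w_sum x).
under eq_bigr do rewrite mulr_suml.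
rewrite exchange_big; apply: eq_bigr => j' _ /=.
under eq_bigr do rewrite -mulrA.
rewrite -mulr_sumr -form_eval_comb form_eval_cons.
by rewrite fm_weight_elim mul0r add0r.
Qed.

End FourierMotzkin.

Theorem farkas_affine (R : realFieldType) (I J : finType) (a : J -> I -> R) (b : J -> R) :
  (exists x : I -> R, forall j, 0 <= \sum_i a j i * x i + b j) \/
  (exists w : J -> R, (forall j, 0 <= w j) /\
     forall x, \sum_j w j * (\sum_i a j i * x i + b j) = -1).
Proof. exact: farkas_seq (index_enum_uniq I) J a b. Qed.

Section AffineMatrixMaps.
Variables (R : realType) (n : nat).
Implicit Types (f h : 'M[R]_n -> R) (P : 'M[R]_n) (F : 'I_n -> 'I_n -> R).

Definition mxpair P F : R := \sum_i \sum_k P i k * F i k.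

Lemma eq_mxpair P F G : (forall i k, F i k = G i k) -> mxpair P F = mxpair P G.
Proof. by move=> FG; apply: eq_bigr => i _; apply: eq_bigr => k _; rewrite FG. Qed.

Lemma mxpair0 F : mxpair 0 F = 0.
Proof. by rewrite /mxpair big1 // => i _; rewrite big1 // => k _; rewrite mxE mul0r. Qed.

Lemma mxpair_delta i k F : mxpair (delta_mx i k) F = F i k.
Proof.
rewrite /mxpair (bigD1 i) //= [X in _ + X]big1 => [|i' /negbTE i'i]; last first.
  by rewrite big1 // => k' _; rewrite mxE i'i mul0r.
rewrite addr0 (bigD1 k) //= [X in _ + X]big1 => [|k' /negbTE k'k]; last first.
  by rewrite mxE k'k andbF mul0r.
by rewrite mxE !eqxx mul1r addr0.
Qed.

Lemma mxpairD P F G : mxpair P F + mxpair P G = mxpair P (fun i k => F i k + G i k).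
Proof.
rewrite /mxpair -big_split; apply: eq_bigr => i _.
by rewrite -big_split; apply: eq_bigr => k _; rewrite mulrDr.
Qed.

Lemma mxpairB P F G : mxpair P F - mxpair P G = mxpair P (fun i k => F i k - G i k).
Proof.
rewrite /mxpair -sumrB; apply: eq_bigr => i _.
by rewrite -sumrB; apply: eq_bigr => k _; rewrite mulrBr.
Qed.

Lemma mxpairMl c P F : c * mxpair P F = mxpair P (fun i k => c * F i k).
Proof.
rewrite /mxpair mulr_sumr; apply: eq_bigr => i _.
by rewrite mulr_sumr; apply: eq_bigr => k _; rewrite mulrCA.
Qed.

Lemma mxpair_sum (T : Type) (s : seq T) (w : T -> R) (G : T -> 'I_n -> 'I_n -> R) P :
  \sum_(l <- s) w l * mxpair P (G l) = mxpair P (fun i k => \sum_(l <- s) w l * G l i k).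
Proof.
under eq_bigr do rewrite mxpairMl.
rewrite /mxpair exchange_big; apply: eq_bigr => i _.
rewrite exchange_big; apply: eq_bigr => k _.
by rewrite mulr_sumr; apply: eq_bigr => l _; rewrite mulrCA.
Qed.

Lemma mxpair_swap (A B : 'M[R]_n) (c : 'I_n -> 'I_n -> R) :
  mxpair A (fun i k => c i k * B i k) = mxpair B (fun i k => c i k * A i k).
Proof. by apply: eq_bigr => i _; apply: eq_bigr => k _; ring. Qed.

Lemma mxpair_sym_colmean (A B : 'M[R]_n) (c : 'I_n -> R) :
  mxpair A (fun i k => c k * (c k * \sum_j B j k - B i k)) =
  mxpair B (fun i k => c k * (c k * \sum_j A j k - A i k)).
Proof.
have E (X Y : 'M[R]_n) : mxpair X (fun i k => c k * (c k * \sum_j Y j k - Y i k)) =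
    \sum_k c k * c k * (\sum_i X i k) * (\sum_j Y j k) - \sum_k \sum_i X i k * c k * Y i k.
  rewrite /mxpair exchange_big -sumrB; apply: eq_bigr => k _.
  by rewrite (mulr_sumr _ _ _ (c k * c k)) mulr_suml -sumrB; apply: eq_bigr => i _; ring.
rewrite !E; congr (_ - _); apply: eq_bigr => k _; last by apply: eq_bigr => i _; ring.
by ring.
Qed.

Lemma sum_pair (I1 I2 : finType) (F : I1 * I2 -> R) :
  \sum_p F p = \sum_i \sum_j F (i, j).
Proof. by rewrite pair_bigA; apply: eq_bigr => -[i j]. Qed.

Lemma mxpair_const (c K : R) F : (forall P, c + mxpair P F = K) ->
  K = c /\ forall i k, F i k = 0.
Proof.
move=> cK; have K_c : K = c by rewrite -(cK 0) mxpair0 addr0.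
split=> // i k; have := cK (delta_mx i k).
rewrite mxpair_delta K_c => /(congr1 (fun z => z - c)) /=.
by rewrite subrr addrAC subrr add0r.
Qed.

Lemma affine_cst c : affine_fun (fun _ : 'M[R]_n => c).
Proof. by move=> x y a; ring. Qed.

Lemma affine_entry i k : affine_fun (fun P : 'M[R]_n => P i k).
Proof. by move=> x y a; rewrite !mxE. Qed.

Lemma affineD f h : affine_fun f -> affine_fun h -> affine_fun (fun P => f P + h P).
Proof. by move=> af ah x y a; rewrite af ah; ring. Qed.

Lemma affineB f h : affine_fun f -> affine_fun h -> affine_fun (fun P => f P - h P).
Proof. by move=> af ah x y a; rewrite af ah; ring. Qed.

Lemma affineMl c f : affine_fun f -> affine_fun (fun P => c * f P).
Proof. by move=> af x y a; rewrite af; ring. Qed.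

Lemma affineMr c f : affine_fun f -> affine_fun (fun P => f P * c).
Proof. by move=> af x y a; rewrite af; ring. Qed.

Lemma affine_sum (T : Type) (s : seq T) (Pr : pred T) (F : T -> 'M[R]_n -> R) :
  (forall l, affine_fun (F l)) -> affine_fun (fun P => \sum_(l <- s | Pr l) F l P).
Proof.
by move=> aF x y a; under eq_bigr do rewrite aF; rewrite big_split -!mulr_sumr.
Qed.

Lemma affine_expand h : affine_fun h ->
  forall P, h P = h 0 + mxpair P (fun i k => h (delta_mx i k) - h 0).
Proof.
move=> ah; pose L P := h P - h 0.
have aL x y a : L (a *: x + (1 - a) *: y) = a * L x + (1 - a) * L y.
  by rewrite /L ah; ring.
have L0 : L 0 = 0 by rewrite /L subrr.
have LZ a x : L (a *: x) = a * L x.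
  by have := aL x 0 a; rewrite scaler0 addr0 L0 mulr0 addr0.
have LD x y : L (x + y) = L x + L y.
  have half : 1 - 2^-1 = 2^-1 :> R by field.
  have := aL (2 *: x) (2 *: y) 2^-1.
  rewrite half !scalerA mulVf ?pnatr_eq0 // !scale1r => ->.
  by rewrite !LZ !mulrA mulVf ?pnatr_eq0 // !mul1r.
move=> P; apply/eqP; rewrite addrC -subr_eq; apply/eqP.
rewrite -/(L P) {1}(matrix_sum_delta P) (big_morph L LD L0).
apply: eq_bigr => i _; rewrite (big_morph L LD L0).
by apply: eq_bigr => k _; rewrite LZ.
Qed.

Lemma farkas_mx (J : finType) (g : J -> 'M[R]_n -> R) :
  (forall j, affine_fun (g j)) ->
  (exists P, forall j, 0 <= g j P) \/
  (exists w : J -> R, (forall j, 0 <= w j) /\ forall P, \sum_j w j * g j P = -1).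
Proof.
move=> ag; pose a j (p : 'I_n * 'I_n) := g j (delta_mx p.1 p.2) - g j 0.
have gE j P : g j P = \sum_p a j p * P p.1 p.2 + g j 0.
  rewrite [LHS](affine_expand (ag j)) addrC /mxpair pair_bigA; congr (_ + _).
  by apply: eq_bigr => -[i k] _; rewrite mulrC.
have [[x x_feas]|[w [w_ge0 w_sum]]] := farkas_affine a (fun j => g j 0).
  left; exists (\matrix_(i, k) x (i, k)) => j; rewrite gE.
  by rewrite (eq_bigr (fun p => a j p * x p)) ?x_feas // => -[i k] _; rewrite mxE.
right; exists w; split=> // P; rewrite -(w_sum (fun p => P p.1 p.2)).
by apply: eq_bigr => j _; rewrite gE.
Qed.

End AffineMatrixMaps.

Lemma lee_fin_ub (R : realType) (x z : \bar R) :
  (forall M : R, z < M%:E -> x <= M%:E)%E -> (x <= z)%E.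
Proof.
case: z => [r| |] xM; last 2 first.
- exact: leey.
- by rewrite (eq_ninfty (fun M => xM M (ltNyr M))).
by apply/lee_addgt0Pr => e e0; rewrite -EFinD xM // lte_fin ltrDl.
Qed.

Lemma ereal_inf_bigcup (R : realType) (T : Type) (A : set T) (F : T -> set (\bar R)) :
  ereal_inf [set ereal_inf (F x) | x in A] = ereal_inf (\bigcup_(x in A) F x).
Proof.
apply/le_anti/andP; split.
  apply: le_ereal_inf_tmp => z [x Ax Fxz].
  by apply: le_trans (ereal_inf_lbound _) (ereal_inf_lbound Fxz); exists x.
apply: le_ereal_inf_tmp => _ [x Ax <-].
by apply: ereal_inf_le_tmp => z Fxz; exists x.
Qed.

Section LinearProgramDuality.
Variables (R : realType) (n : nat) (J : finType).
Variables (g : J -> 'M[R]_n -> R) (f : 'M[R]_n -> R).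
Hypotheses (affine_g : forall j, affine_fun (g j)) (affine_f : affine_fun f).

Definition dual_certificate (w : J -> R) (K : R) : Prop :=
  (forall j, 0 <= w j) /\ forall P, f P + \sum_j w j * g j P = K.

Lemma dual_certificate_ub w K P :
  dual_certificate w K -> (forall j, 0 <= g j P) -> f P <= K.
Proof.
move=> [w_ge0 fK] gP; rewrite -(fK P) lerDl.
by apply: sumr_ge0 => j _; apply: mulr_ge0.
Qed.

Lemma exists_dual_certificate_le M :
  (exists w K, dual_certificate w K) ->
  (forall P, (forall j, 0 <= g j P) -> f P < M) ->
  exists w K, K <= M /\ dual_certificate w K.
Proof.
(* Farkas for the constraints together with [f >= M]: the certificate of infeasibility
   either weighs [f] and can be rescaled, or it does not and improves [w0] at will. *)
move=> [w0 [K0 [w0_ge0 w0K0]]] fM.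
pose g' (o : J + 'I_1) P := if o is inl j then g j P else f P - M.
have affine_g' o : affine_fun (g' o).
  by case: o => [j|o]; [exact: affine_g | exact: affineB affine_f (affine_cst M)].
have [[P g'P]|[w [w_ge0 w_sum]]] := farkas_mx affine_g'.
  have := fM P (fun j => g'P (inl j)); have := g'P (inr ord0).
  by rewrite /= subr_ge0 => /le_lt_trans/[apply]; rewrite ltxx.
pose v := w (inr ord0).
have wE P : \sum_j w (inl j) * g j P + v * (f P - M) = -1.
  by rewrite -(w_sum P) big_sumType big_ord1.
have [v_eq0|v_gt0] : v = 0 \/ 0 < v.
  by apply/predU1P; rewrite eq_sym -le_eqVlt; exact: w_ge0.
- pose s := `|K0 - M|.
  exists (fun j => w0 j + s * w (inl j)), (K0 - s); split.
    by rewrite lerBlDr -lerBlDl ler_norm.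
  split=> [j|P]; first exact: addr_ge0 (w0_ge0 j) (mulr_ge0 (normr_ge0 _) (w_ge0 _)).
  have := wE P; rewrite v_eq0 mul0r addr0 => w_inl.
  under eq_bigr do rewrite mulrDl -mulrA.
  by rewrite big_split /= addrA w0K0 -mulr_sumr w_inl mulrN1.
- exists (fun j => w (inl j) / v), (M - v^-1); split.
    by rewrite gerBl invr_ge0 ltW.
  split=> [j|P]; first by rewrite divr_ge0 ?(ltW v_gt0).
  under eq_bigr do rewrite mulrAC.
  rewrite -mulr_suml (_ : \sum_j _ = -1 - v * (f P - M)); last by rewrite -(wE P); ring.
  by field; rewrite gt_eqF.
Qed.

Theorem lp_duality : (exists w K, dual_certificate w K) ->
  ereal_sup [set (f P)%:E | P in [set P | forall j, 0 <= g j P]] =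
  ereal_inf [set K%:E | K in [set K | exists w, dual_certificate w K]].
Proof.
move=> cert0; apply/le_anti/andP; split.
  apply: ge_ereal_sup => _ [P gP <-]; apply: le_ereal_inf_tmp => _ [K [w cert] <-].
  by rewrite lee_fin (dual_certificate_ub cert gP).
apply: lee_fin_ub => M supM.
have fM P : (forall j, 0 <= g j P) -> f P < M.
  move=> gP; rewrite -lte_fin; apply: le_lt_trans supM.
  by apply: ereal_sup_ubound; exists P.
have [w [K [KM cert]]] := exists_dual_certificate_le cert0 fM.
apply: le_trans (ereal_inf_lbound _) _; first by exists K => //; exists w.
by rewrite lee_fin.
Qed.

End LinearProgramDuality.

Section LPCoefficients.
Variables (R : realType) (n : nat).
Implicit Types (met : metric R) (y : 'I_n -> bool) (P Q : 'M[R]_n).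

Definition gamma_lhs met y P : R :=
  \sum_(k < n.+1) \sum_(tm <- met)
      (mg tm k (lstar y))^-1 *
        (ma tm * dotv (p1 P k) (yvec R y)
         + mb tm * dotv (p0 P k) (fun i => 1 - yvec R y i)
         + mf tm k (lstar y) * rk P k).

(* The coefficient of [P i k] in the affine map [h], times the column size [k+1]
   (column [k : 'I_n] is the paper's column [k+1]). *)
Definition lp_coef (h : 'M[R]_n -> R) : 'M[R]_n :=
  \matrix_(i, k) (k.+1%:R * (h (delta_mx i k) - h 0)).

Definition lp_c met Q : R := O0 met Q 0.
Definition lp_Z met Q : 'M[R]_n := lp_coef (O0 met Q).
Definition lp_mu met y : R := gamma_lhs met y 0.
Definition lp_B met y : 'M[R]_n := lp_coef (gamma_lhs met y).

Lemma affine_expand_coef h : affine_fun h ->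
  forall P, h P = h 0 + mxpair P (fun i k => (k.+1%:R)^-1 * lp_coef h i k).
Proof.
move=> ah P; rewrite [LHS](affine_expand ah P); congr (_ + _).
by apply: eq_mxpair => i k; rewrite mxE mulKf ?pnatr_eq0.
Qed.

Lemma affine_p1 k i : affine_fun (fun P : 'M[R]_n => p1 P k i).
Proof. exact: affine_sum (fun j => affine_entry i j). Qed.

Lemma affine_rk k : affine_fun (fun P : 'M[R]_n => rk P k).
Proof.
case: k => [|k]; last by apply: affineMl; apply: affine_sum => i; exact: affine_p1.
apply: affineB; first exact: affine_cst.
by apply: affine_sum => j; apply: affineMl; apply: affine_sum => i; exact: affine_entry.
Qed.

Lemma affine_p0 k i : affine_fun (fun P : 'M[R]_n => p0 P k i).
Proof. exact: affineB (affine_rk k) (affine_p1 k i). Qed.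

Lemma affine_O0_l met P : affine_fun (fun Q => O0 met Q P).
Proof.
apply: affine_sum => k; apply: affine_sum => l; apply: affine_sum => tm.
apply: affineMl; apply: affineD; first apply: affineD.
- by apply: affineMl; apply: affine_sum => i; apply: affineMl; exact: affine_p1.
- by apply: affineMl; apply: affine_sum => i; apply: affineMl; exact: affine_p0.
- by apply: affineMl; exact: affine_rk.
Qed.

Lemma affine_O0_r met Q : affine_fun (O0 met Q).
Proof.
apply: affine_sum => k; apply: affine_sum => l; apply: affine_sum => tm.
apply: affineMl; apply: affineD; first apply: affineD.
- by apply: affineMl; apply: affine_sum => i; apply: affineMr; exact: affine_p1.
- by apply: affineMl; apply: affine_sum => i; apply: affineMr; exact: affine_p0.
- by apply: affineMr; apply: affineMl; exact: affine_rk.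
Qed.

Lemma affine_gamma_lhs met y : affine_fun (gamma_lhs met y).
Proof.
apply: affine_sum => k; apply: affine_sum => tm.
apply: affineMl; apply: affineD; first apply: affineD.
- by apply: affineMl; apply: affine_sum => i; apply: affineMr; exact: affine_p1.
- by apply: affineMl; apply: affine_sum => i; apply: affineMr; exact: affine_p0.
- by apply: affineMl; exact: affine_rk.
Qed.

Lemma affine_lp_c met : affine_fun (lp_c met).
Proof. exact: affine_O0_l. Qed.

Lemma affine_lp_Z met : affine_mx (lp_Z met).
Proof.
move=> Q Q' a; apply/matrixP => i k; rewrite !mxE.
by rewrite !(affine_O0_l met (delta_mx i k)) !(affine_O0_l met 0); ring.
Qed.

End LPCoefficients.

Section InnerLinearProgram.
Variables (R : realType) (n : nat) (met0 : metric R) (t : nat).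
Variables (metrics : 'I_t -> metric R) (y : 'I_n -> bool) (tau : 'I_t -> R).
Variables (u : 'I_n -> R) (Q : 'M[R]_n).

Local Notation colw k := ((k : 'I_n).+1%:R^-1 : R).

Definition inner_obj (P : 'M[R]_n) : R := O0 met0 Q P - dotv (Q1 Q) u.

Definition lp_row (alpha : 'M[R]_n) (beta : 'I_t -> R) (i k : 'I_n) : R :=
  lp_Z met0 Q i k - alpha i k + colw k * \sum_(j < n) alpha j k
  + \sum_(l < t) beta l * lp_B (metrics l) y i k.

Definition lp_obj (beta : 'I_t -> R) (v : R) : R :=
  v + lp_c met0 Q - \sum_(i < n) \sum_(k < n) Q i k * u i
  + \sum_(l < t) beta l * (lp_mu (metrics l) y - tau l).

Definition lp_feasible (alpha : 'M[R]_n) (beta : 'I_t -> R) (v : R) : Prop :=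
  [/\ forall i k, 0 <= alpha i k, (forall l, 0 <= beta l) /\ 0 <= v &
      forall i k, lp_row alpha beta i k <= v].

Definition lp_values : set (\bar R) :=
  [set z | exists alpha beta v, lp_feasible alpha beta v /\ z = (lp_obj beta v)%:E].

Definition constr_idx := ((('I_n * 'I_n) + ('I_n * 'I_n)) + 'I_1 + 'I_t)%type.

(* The column constraints are scaled by [1/(k+1)] so that their multipliers are
   exactly the [alpha] of the linear program. *)
Definition constr (j : constr_idx) (P : 'M[R]_n) : R :=
  match j with
  | inl (inl (inl (i, k))) => colw k * P i k
  | inl (inl (inr (i, k))) => colw k * (colw k * \sum_(j < n) P j k - P i k)
  | inl (inr _) => 1 - \sum_(k < n) colw k * \sum_(i < n) P i k
  | inr l => gamma_lhs (metrics l) y P - tau l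
  end.

Definition multiplier (s alpha : 'M[R]_n) (beta : 'I_t -> R) (v : R)
    (j : constr_idx) : R :=
  match j with
  | inl (inl (inl (i, k))) => s i k
  | inl (inl (inr (i, k))) => alpha i k
  | inl (inr _) => v
  | inr l => beta l
  end.

Lemma multiplierE (w : constr_idx -> R) :
  w = multiplier (\matrix_(i, k) w (inl (inl (inl (i, k)))))
                 (\matrix_(i, k) w (inl (inl (inr (i, k)))))
                 (fun l => w (inr l)) (w (inl (inr ord0))).
Proof. by apply/funext => -[[[[i k]|[i k]]|o]|l] /=; rewrite ?mxE ?ord1. Qed.

Lemma affine_constr j : affine_fun (constr j).
Proof.
case: j => [[[[i k]|[i k]]|o]|l].
- exact: affineMl (affine_entry i k).
- apply: affineMl; apply: affineB (affine_entry i k).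
  by apply: affineMl; apply: affine_sum => j; exact: affine_entry.
- apply: affineB; first exact: affine_cst.
  by apply: affine_sum => k; apply: affineMl; apply: affine_sum => i; exact: affine_entry.
- exact: affineB (affine_gamma_lhs _ _) (affine_cst _).
Qed.

Lemma affine_inner_obj : affine_fun inner_obj.
Proof. exact: affineB (affine_O0_r met0 Q) (affine_cst _). Qed.

Lemma constr_ge0P P :
  (forall j, 0 <= constr j P) <-> inDelta P /\ inGamma metrics y tau P.
Proof.
have colw_gt0 (k : 'I_n) : 0 < colw k by rewrite invr_gt0 ltr0Sn.
split=> [P_ge0|[[P_ge0 [P_col P_sum]] P_gamma]].
  split; [split; [|split]|].
  - by move=> i k; have := P_ge0 (inl (inl (inl (i, k)))); rewrite /= pmulr_rge0.
  - move=> i k; have := P_ge0 (inl (inl (inr (i, k)))).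
    by rewrite /= pmulr_rge0 // subr_ge0.
  - by have := P_ge0 (inl (inr ord0)); rewrite /= subr_ge0.
  - by move=> l; have := P_ge0 (inr l); rewrite /= subr_ge0; apply.
case=> [[[[i k]|[i k]]|o]|l] /=.
- by rewrite pmulr_rge0.
- by rewrite pmulr_rge0 // subr_ge0.
- by rewrite subr_ge0.
- by rewrite subr_ge0; exact: P_gamma.
Qed.

Lemma inner_objE P :
  inner_obj P = lp_c met0 Q - \sum_(i < n) \sum_(k < n) Q i k * u i
                + mxpair P (fun i k => colw k * lp_Z met0 Q i k).
Proof.
rewrite /inner_obj (affine_expand_coef (affine_O0_r met0 Q)) /lp_c /lp_Z.
rewrite /dotv /Q1 (eq_bigr (fun i => \sum_k Q i k * u i)) => [|i _]; last exact: mulr_suml.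
by rewrite addrAC.
Qed.

Lemma multiplier_constrE s alpha beta v P :
  \sum_j multiplier s alpha beta v j * constr j P =
  v + \sum_(l < t) beta l * (lp_mu (metrics l) y - tau l)
  + mxpair P (fun i k => colw k * (s i k - alpha i k + colw k * \sum_j alpha j k - v
                                   + \sum_(l < t) beta l * lp_B (metrics l) y i k)).
Proof.
rewrite !big_sumType big_ord1 /= !sum_pair /=.
have -> : \sum_i \sum_k s i k * (colw k * P i k) = mxpair P (fun i k => colw k * s i k).
  exact: mxpair_swap.
have -> : \sum_i \sum_k alpha i k * (colw k * (colw k * \sum_j P j k - P i k)) =
          mxpair P (fun i k => colw k * (colw k * \sum_j alpha j k - alpha i k)).
  exact: mxpair_sym_colmean.
have -> : \sum_k colw k * \sum_i P i k = mxpair P (fun i k => colw k).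
  rewrite /mxpair exchange_big; apply: eq_bigr => k _.
  by rewrite mulr_sumr; apply: eq_bigr => i _; rewrite mulrC.
under eq_bigr do rewrite (affine_expand_coef (affine_gamma_lhs _ _)).
have -> : \sum_l beta l * (gamma_lhs (metrics l) y 0 +
    mxpair P (fun i k => colw k * lp_coef (gamma_lhs (metrics l) y) i k) - tau l) =
  \sum_l beta l * (lp_mu (metrics l) y - tau l) +
  mxpair P (fun i k => \sum_l beta l * (colw k * lp_B (metrics l) y i k)).
  rewrite -mxpair_sum -big_split /=; apply: eq_bigr => l _; rewrite /lp_mu /lp_B.
  ring.
rewrite mulrBr mulr1 mxpairMl mxpairD.
have -> : mxpair P (fun i k => colw k * (s i k - alpha i k + colw k * \sum_j alpha j k - v
                                        + \sum_l beta l * lp_B (metrics l) y i k)) =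
    mxpair P (fun i k => colw k * s i k + colw k * (colw k * \sum_j alpha j k - alpha i k))
    - mxpair P (fun _ k => v * colw k)
    + mxpair P (fun i k => \sum_l beta l * (colw k * lp_B (metrics l) y i k)).
  rewrite mxpairB mxpairD; apply: eq_mxpair => i k.
  rewrite [in RHS](eq_bigr (fun l => colw k * (beta l * lp_B (metrics l) y i k))) => [|l _].
    by rewrite -mulr_sumr; ring.
  exact: mulrCA.
by ring.
Qed.

Lemma lagrangianE s alpha beta v P :
  inner_obj P + \sum_j multiplier s alpha beta v j * constr j P =
  lp_obj beta v + mxpair P (fun i k => colw k * (lp_row alpha beta i k + s i k - v)).
Proof.
rewrite inner_objE multiplier_constrE /lp_obj.
suff -> : mxpair P (fun i k => colw k * (lp_row alpha beta i k + s i k - v)) =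
  mxpair P (fun i k => colw k * lp_Z met0 Q i k) +
  mxpair P (fun i k => colw k * (s i k - alpha i k + colw k * \sum_j alpha j k - v
                                 + \sum_(l < t) beta l * lp_B (metrics l) y i k)) by ring.
by rewrite mxpairD; apply: eq_mxpair => i k; rewrite /lp_row; ring.
Qed.

Lemma lp_feasible_certificate alpha beta v : lp_feasible alpha beta v ->
  dual_certificate constr inner_obj
    (multiplier (\matrix_(i, k) (v - lp_row alpha beta i k)) alpha beta v) (lp_obj beta v).
Proof.
move=> [alpha_ge0 [beta_ge0 v_ge0] rows]; split.
  by case=> [[[[i k]|[i k]]|o]|l] //=; rewrite mxE subr_ge0.
move=> P; rewrite lagrangianE /mxpair big1 ?addr0 // => i _.
by rewrite big1 // => k _; rewrite mxE; ring.
Qed.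

Lemma certificate_lp_feasible s alpha beta v K :
  dual_certificate constr inner_obj (multiplier s alpha beta v) K ->
  lp_feasible alpha beta v /\ K = lp_obj beta v.
Proof.
move=> [w_ge0 wK].
have [-> coef0] : K = lp_obj beta v /\
    forall i k, colw k * (lp_row alpha beta i k + s i k - v) = 0.
  by apply: mxpair_const => P; rewrite -lagrangianE.
split=> //; split.
- by move=> i k; exact: (w_ge0 (inl (inl (inr (i, k))))).
- by split=> [l|]; [exact: (w_ge0 (inr l)) | exact: (w_ge0 (inl (inr ord0)))].
- move=> i k; have := w_ge0 (inl (inl (inl (i, k)))) => /= s_ge0.
  move/eqP: (coef0 i k); rewrite mulf_eq0 invr_eq0 pnatr_eq0 /= => /eqP row_eq.
  lra.
Qed.

Lemma exists_lp_feasible : exists alpha beta v, lp_feasible alpha beta v.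
Proof.
pose V := \sum_i \sum_k `|lp_Z met0 Q i k|.
have le_sum (I : finType) (F : I -> R) i : (forall j, 0 <= F j) -> F i <= \sum_j F j.
  by move=> F_ge0; rewrite (bigD1 i) //= lerDl sumr_ge0.
have zero_entry j k : (0 : 'M[R]_n) j k = 0 by rewrite mxE.
exists 0, (fun _ => 0), V; split=> [i k|| i k]; first by rewrite zero_entry.
  by split=> //; apply: sumr_ge0 => i _; apply: sumr_ge0.
rewrite /lp_row zero_entry subr0 big1 ?mulr0 ?addr0 => [|j _ //].
rewrite big1 ?addr0 => [|l _]; last by rewrite mul0r.
apply: le_trans (ler_norm _) _; apply: le_trans (le_sum _ _ k _) (le_sum _ _ i _) => // j.
exact: sumr_ge0.
Qed.

Lemma inner_max_eq_lp :
  ereal_sup [set (inner_obj P)%:E | P in [set P | inDelta P /\ inGamma metrics y tau P]] =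
  ereal_inf lp_values.
Proof.
have -> : [set P | inDelta P /\ inGamma metrics y tau P] = [set P | forall j, 0 <= constr j P].
  by apply/seteqP; split=> P /constr_ge0P.
rewrite (lp_duality affine_constr affine_inner_obj); last first.
  have [alpha [beta [v feas]]] := exists_lp_feasible.
  by do 2 eexists; exact: lp_feasible_certificate feas.
congr ereal_inf; apply/seteqP; split.
  move=> _ [K [w cert] <-]; move: cert.
  rewrite [w]multiplierE => /certificate_lp_feasible[feas ->].
  by do 3 eexists; split; first exact: feas.
move=> _ [alpha [beta [v [feas ->]]]]; exists (lp_obj beta v) => //.
by eexists; exact: lp_feasible_certificate feas.
Qed.

End InnerLinearProgram.

Theorem theorem6 (R : realType) (n : nat) (hn : (0 < n)%N) :
  exists (C : metric R -> 'M[R]_n -> R) (Zf : metric R -> 'M[R]_n -> 'M[R]_n)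
         (Mu : metric R -> ('I_n -> bool) -> R)
         (Bf : metric R -> ('I_n -> bool) -> 'M[R]_n),
    (forall met : metric R, affine_fun (C met) /\ affine_mx (Zf met)) /\
    forall (m t : nat) (met0 : metric R) (metrics : 'I_t -> metric R)
           (y : 'I_n -> bool) (Psi : 'M[R]_(m, n)) (tau : 'I_t -> R)
           (theta : 'cV[R]_m),
      (0 < m)%N -> (0 < t)%N ->
      g_nonzero n met0 -> (forall l, g_nonzero n (metrics l)) ->
      minmax_value met0 metrics y tau Psi theta =
      lp_value (C met0) (Zf met0) (fun l => Mu (metrics l) y)
               (fun l => Bf (metrics l) y) tau Psi theta.
Proof.
exists (@lp_c R n), (@lp_Z R n), (@lp_mu R n), (@lp_B R n).
split=> [met|m t met0 metrics y Psi tau theta _ _ _ _].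
  exact: conj (affine_lp_c met) (affine_lp_Z met).
rewrite /minmax_value (eq_imagel (fun Q _ => inner_max_eq_lp met0 metrics y tau
                                   (PsiT_theta Psi theta) Q)).
rewrite ereal_inf_bigcup /lp_value; congr ereal_inf; apply/seteqP; split.
  move=> _ [Q dQ [alpha [beta [v [[alpha_ge0 beta_v_ge0 rows] ->]]]]].
  by exists Q, alpha, beta, v; split.
move=> _ [Q [alpha [beta [v [dQ alpha_ge0 beta_v_ge0 rows ->]]]]].
by exists Q => //; exists alpha, beta, v; split.
Qed.
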